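(* Let $(r_i)_{i\in\mathbb{N}_0}\subseteq\mathbb{N}$ be a sequence of natural numbers. Then there exist a sequence $(c_i)_{i\in\mathbb{N}_0}\subseteq(0,\infty)$ and a sequence $(k_i)_{i\in\mathbb{N}_0}\subseteq\mathbb{N}$ such that $T=\sum_{i\in\mathbb{N}_0}p_i\cdot\partial_x^i$ with $p_{2i}(x)=c_i+x^{2k_ir_i}$ and $p_{2i+1}(x)=0$ for all $i\in\mathbb{N}_0$ is a positivity preserver on $\mathbb{R}[x]$.
   Context: A linear map $T:\mathbb{R}[x]\to\mathbb{R}[x]$ is a positivity preserver if it maps every polynomial that is non-negative on $\mathbb{R}$ to a polynomial that is non-negative on $\mathbb{R}$. The operator $\sum_i p_i\partial_x^i$ acts on each polynomial as a finite sum. *)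

From HB Require Import structures.
From mathcomp Require Import all_boot all_order all_algebra.
From mathcomp Require Import reals.
Set Implicit Arguments. Unset Strict Implicit. Unset Printing Implicit Defensive.
Import Order.TTheory GRing.Theory Num.Theory.
Local Open Scope ring_scope.

Definition nonneg_on_R (R : realType) (f : {poly R}) : Prop :=
  forall x : R, 0 <= f.[x].

Definition positivity_preserver (R : realType) (T : {poly R} -> {poly R}) : Prop :=
  forall f : {poly R}, nonneg_on_R f -> nonneg_on_R (T f).

(* The operator sum_i p_i * d^i, acting on f as the finite sum over i < size f
   (higher derivatives of f vanish). *)
Definition diff_op (R : realType) (p : nat -> {poly R}) (f : {poly R}) : {poly R} :=
  \sum_(i < size f) p i * f^`(i).

(* Write f >= 0 as a sum of squares h^2 (via its minimum and a double root) and
   expand around x: with g = h \Po ('X + x) and s_i = p_i(x) i!, the value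
   (T h^2)(x) is the Hankel form sum_(j,l) s_(j+l) g_j g_l. This form is
   nonnegative as soon as 2^(j+l+2) s_(j+l)^2 <= s_(2j) s_(2l) for j < l, by
   weighted diagonal dominance with weights 2^-(l+2). Odd weights vanish, and for
   j + l = 2h with j < h < l the inequality holds once c_(h+1) absorbs c_h^2 and
   the exponents k_i r_i more than double from one index to the next. *)

From HB Require Import structures.
From mathcomp Require Import all_boot all_order all_algebra.
From mathcomp Require Import reals polyrcf topology normedtype derive.
From mathcomp Require Import ring lra zify.
Set Implicit Arguments.
Unset Strict Implicit.
Unset Printing Implicit Defensive.
Import Order.TTheory GRing.Theory Num.Theory.
Import numFieldNormedType.Exports.
Local Open Scope ring_scope.

Section NonnegPoly.
Variable R : realType.
Implicit Types (f g p : {poly R}) (a : R).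

Lemma poly_ge0_right p a : (forall y, a < y -> 0 <= p.[y]) -> 0 <= p.[a].
Proof.
move=> p_ge0; rewrite leNgt; apply/negP => pa_lt0.
have := @poly_cont _ a p (- p.[a]); rewrite oppr_gt0 => /(_ pa_lt0)[d d_gt0 near_a].
have y_gt : a < a + d / 2 by lra.
have y_near : `|a + d / 2 - a| < d by rewrite addrAC subrr add0r ger0_norm; lra.
have := ler_norm (p.[a + d / 2] - p.[a]); have := near_a _ y_near.
by have := p_ge0 _ y_gt; lra.
Qed.

Lemma poly_ge0_left p a : (forall y, y < a -> 0 <= p.[y]) -> 0 <= p.[a].
Proof.
move=> p_ge0; have := @poly_ge0_right (p \Po - 'X) (- a).
rewrite horner_comp hornerN hornerX opprK; apply=> y ay.
by rewrite horner_comp hornerN hornerX p_ge0 // ltrNl.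
Qed.

Lemma nonneg_poly_lead_gt0 f : nonneg_on_R f -> f != 0 -> 0 < lead_coef f.
Proof.
move=> f_ge0 f_neq0; rewrite lt_def lead_coef_eq0 f_neq0 /= leNgt.
apply/negP => lead_lt0; have [/size1_polyC f_const|f_big] := leqP (size f) 1.
  by move: lead_lt0 (f_ge0 0); rewrite f_const lead_coefC hornerC; lra.
have lead_opp_gt0 : 0 < lead_coef (- f) by rewrite lead_coefN oppr_gt0.
have size_opp : (1 < size (- f))%N by rewrite size_polyN.
have [n nf_big] := poly_lim_infty 1 lead_opp_gt0 size_opp.
by have := f_ge0 n; have := nf_big n (lexx n); rewrite hornerN; lra.
Qed.

Lemma nonneg_poly_ge_far f m : nonneg_on_R f -> (1 < size f)%N ->
  exists B, forall x, B <= `|x| -> m <= f.[x].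
Proof.
move=> f_ge0 f_big; pose g := f \Po - 'X.
have g_big : (1 < size g)%N by rewrite size_comp_poly2 // size_polyN size_polyX.
have g_ge0 : nonneg_on_R g by move=> y; rewrite horner_comp.
have lead_gt0 (h : {poly R}) : nonneg_on_R h -> (1 < size h)%N -> 0 < lead_coef h.
  by move=> h_ge0 h_big; apply: nonneg_poly_lead_gt0; rewrite // -size_poly_gt0 ltnW.
have [n1 f_far] := poly_lim_infty m (lead_gt0 _ f_ge0 f_big) f_big.
have [n2 g_far] := poly_lim_infty m (lead_gt0 _ g_ge0 g_big) g_big.
exists (Num.max n1 n2) => x; rewrite ge_max => /andP[n1x n2x].
have [x_ge0|x_lt0] := leP 0 x.
  by apply: f_far; rewrite -(ger0_norm x_ge0).
have := g_far (- x); rewrite horner_comp hornerN hornerX opprK; apply.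
by rewrite -(ltr0_norm x_lt0).
Qed.

Lemma nonneg_poly_min f : nonneg_on_R f -> exists x0, forall x, f.[x0] <= f.[x].
Proof.
move=> f_ge0; have [/size1_polyC f_const|f_big] := leqP (size f) 1.
  by exists 0 => x; rewrite f_const !hornerC.
have [B f_far] := nonneg_poly_ge_far f.[0] f_ge0 f_big.
have [c c_in c_min] : exists2 c, c \in `[- `|B|, `|B|] &
    forall t, t \in `[- `|B|, `|B|] -> f.[c] <= f.[t].
  apply: EVT_min; first by rewrite lerNl (le_trans _ (normr_ge0 B)) ?oppr_le0.
  by apply: continuous_subspaceT => x; exact: continuous_horner.
exists c => x; have fc_le0 : f.[c] <= f.[0].
  by apply: c_min; rewrite in_itv /= oppr_le0 normr_ge0.
have [x_in|x_out] := boolP (x \in `[- `|B|, `|B|]); first exact: c_min.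
apply/(le_trans fc_le0)/f_far; move: x_out; rewrite in_itv /= -ler_norml -ltNge.
by move=> /ltW; apply/le_trans/ler_norm.
Qed.

Lemma nonneg_poly_root_sqr f a : nonneg_on_R f -> root f a ->
  exists2 g, f = ('X - a%:P) ^+ 2 * g & nonneg_on_R g.
Proof.
move=> f_ge0 /factor_theorem[q f_eq].
have f_val y : f.[y] = q.[y] * (y - a) by rewrite f_eq hornerM hornerXsubC.
have /factor_theorem[g q_eq] : root q a.
  rewrite /root eq_le; apply/andP; split.
    rewrite -oppr_ge0 -hornerN; apply: poly_ge0_left => y ya.
    by have := f_ge0 y; rewrite f_val hornerN; nra.
  by apply: poly_ge0_right => y ay; have := f_ge0 y; rewrite f_val; nra.
have g_ge0_off y : y != a -> 0 <= g.[y].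
  move=> ya; have := f_ge0 y; rewrite f_val q_eq hornerM hornerXsubC.
  have : 0 < (y - a) ^+ 2 by rewrite exprn_even_gt0 //= subr_eq0.
  nra.
exists g; first by rewrite f_eq q_eq -mulrA -expr2 mulrC.
move=> y; have [->|ya] := eqVneq y a; last exact: g_ge0_off.
by apply: poly_ge0_right => z az; rewrite g_ge0_off // gt_eqF.
Qed.

Lemma nonneg_poly_sos f :
  nonneg_on_R f -> exists hs : seq {poly R}, f = \sum_(h <- hs) h ^+ 2.
Proof.
elim: {f}(size f) {-2}f (leqnn (size f)) => [|n IH] f size_f f_ge0.
  by exists [::]; rewrite big_nil; apply/eqP; rewrite -size_poly_eq0 -leqn0.
have [a f_min] := nonneg_poly_min f_ge0.
pose F := f - f.[a]%:P.
have F_ge0 : nonneg_on_R F by move=> y; rewrite !hornerE subr_ge0.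
have [g F_eq g_ge0] : exists2 g, F = ('X - a%:P) ^+ 2 * g & nonneg_on_R g.
  by apply: nonneg_poly_root_sqr; rewrite // /root !hornerE subrr.
have size_g : (size g <= n)%N.
  have [->|g_neq0] := eqVneq g 0; first by rewrite size_poly0.
  have : (size F <= n.+1)%N.
    rewrite (leq_trans (size_polyD _ _)) // size_polyN geq_max size_f.
    exact: leq_trans (size_polyC_leq1 _) _.
  rewrite F_eq size_mul ?expf_neq0 ?polyXsubC_eq0 // size_exp_XsubC.
  by rewrite /= !addSn ltnS => /ltnW.
have [hs g_sos] := IH g size_g g_ge0.
have fa_ge0 : 0 <= f.[a] by apply: f_ge0.
exists ((Num.sqrt f.[a])%:P :: [seq ('X - a%:P) * h | h <- hs]).
rewrite big_cons big_map -polyC_exp sqr_sqrtr //.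
rewrite -[LHS](subrK f.[a]%:P) -/F addrC F_eq g_sos mulr_sumr; congr (_ + _).
by apply: eq_bigr => h _; rewrite exprMn.
Qed.

End NonnegPoly.

Section TaylorShift.
Variables (R : comNzRingType) (x : R).
Implicit Types (f g : {poly R}) (s : nat -> R).

Lemma derivn_comp_XaddC f i : (f \Po ('X + x%:P))^`(i) = f^`(i) \Po ('X + x%:P).
Proof.
elim: i => [|i IH]; first by rewrite !derivn0.
by rewrite !derivnS IH deriv_comp derivD derivX derivC addr0 mulr1.
Qed.

Lemma horner_derivn_comp_XaddC f i : (f^`(i)).[x] = (f \Po ('X + x%:P))`_i * i`!%:R.
Proof.
have x_eq : ('X + x%:P).[0] = x by rewrite !hornerE.
rewrite -[in LHS]x_eq -horner_comp -derivn_comp_XaddC horner_coef0 coef_derivn.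
by rewrite addn0 ffactnn mulr_natr.
Qed.

Lemma sum_coef_widen s g n N : (size g <= n <= N)%N ->
  \sum_(i < N) s i * g`_i = \sum_(i < n) s i * g`_i.
Proof.
move=> /andP[gn nN]; rewrite (big_ord_widen N (fun i => s i * g`_i) nN) [RHS]big_mkcond.
apply: eq_bigr => i _; case: ltnP => // ni.
by rewrite nth_default ?mulr0 // (leq_trans gn).
Qed.

Lemma sum_coef_sqr s g N : (2 * size g <= N)%N ->
  \sum_(i < N) s i * (g ^+ 2)`_i =
    \sum_(j < size g) \sum_(l < size g) s (j + l)%N * (g`_j * g`_l).
Proof.
move=> gN.
have g_sqr : g ^+ 2 = \sum_(j < size g) \sum_(l < size g) (g`_j * g`_l) *: 'X^(j + l).
  have g_def : g = \sum_(j < size g) g`_j *: 'X^j by rewrite -poly_def coefK.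
  rewrite expr2 {1}g_def mulr_suml; apply: eq_bigr => j _.
  rewrite [X in _ * X]g_def mulr_sumr.
  by apply: eq_bigr => l _; rewrite -scalerAl -scalerAr scalerA -exprD.
rewrite g_sqr; under eq_bigr => i _ do rewrite coef_sum mulr_sumr.
rewrite exchange_big; apply: eq_bigr => j _.
under eq_bigr => i _ do rewrite coef_sum mulr_sumr.
rewrite exchange_big; apply: eq_bigr => l _.
under eq_bigr => i _ do rewrite coefZ coefXn mulrA mulr_natr mulrb.
rewrite -big_mkcond (big_ord1_eq _ (fun i => s i * (g`_j * g`_l))) ifT //.
by move: (ltn_ord j) (ltn_ord l) gN; lia.
Qed.

End TaylorShift.

Section HankelForm.
Variable R : realFieldType.

Lemma quadratic_form2_ge0 (P Q S X Y : R) : 0 <= P -> 0 <= Q -> S ^+ 2 <= 4 * P * Q ->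
  0 <= P * X ^+ 2 + Q * Y ^+ 2 + S * (X * Y).
Proof.
move=> P_ge0 Q_ge0 S_le; have [P0|P_gt0] := eqVneq P 0.
  have S0 : S = 0.
    by apply/eqP; rewrite -sqrf_eq0 eq_le sqr_ge0 andbT; move: S_le; rewrite P0 mulr0 mul0r.
  by rewrite P0 S0 !mul0r !add0r addr0 mulr_ge0 ?sqr_ge0.
have P_pos : 0 < P by rewrite lt_def P_gt0.
rewrite -(pmulr_rge0 _ (_ : 0 < 4 * P)) ?mulr_gt0 //.
have -> : 4 * P * (P * X ^+ 2 + Q * Y ^+ 2 + S * (X * Y)) =
    (2 * P * X + S * Y) ^+ 2 + (4 * P * Q - S ^+ 2) * Y ^+ 2 by ring.
by rewrite addr_ge0 ?sqr_ge0 // mulr_ge0 ?sqr_ge0 // subr_ge0.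
Qed.

Lemma sum_inv_pow2_le M : \sum_(l < M) (2 ^+ (l + 2))^-1 <= 2^-1 :> R.
Proof.
suff -> : \sum_(l < M) (2 ^+ (l + 2))^-1 = 2^-1 - (2 ^+ (M + 1))^-1 :> R.
  by rewrite gerBl invr_ge0 exprn_ge0.
elim: M => [|M IH]; first by rewrite big_ord0 expr1 subrr.
rewrite big_ord_recr /= IH !addnS !exprS addn0 -addrA; congr (_ + _).
by field; rewrite expf_neq0 // pnatr_eq0.
Qed.

Lemma hankel_form_ge0 (s b : nat -> R) M :
    (forall j, 0 <= s (j + j)%N) ->
    (forall j l, (j < l)%N ->
       2 ^+ (j + l + 2) * s (j + l)%N ^+ 2 <= s (j + j)%N * s (l + l)%N) ->
  0 <= \sum_(j < M) \sum_(l < M) s (j + l)%N * (b j * b l).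
Proof.
move=> s_ge0 s_cross.
pose w l : R := (2 ^+ (l + 2))^-1.
pose A j := s (j + j)%N * b j ^+ 2.
have w_gt0 l : 0 < w l by rewrite invr_gt0 exprn_gt0.
have A_ge0 j : 0 <= A j by rewrite mulr_ge0 ?sqr_ge0.
(* The off-diagonal term (j, l) is bounded below by -(w l * A j + w j * A l), and
   the weights w sum to at most 1/2. *)
have cross j l : (j < l)%N -> - (w l * A j + w j * A l) <= s (j + l)%N * (b j * b l).
  move=> jl; have w_prod : 4 * w l * w j = (2 ^+ (j + l + 2))^-1.
    by rewrite /w !exprD; field; rewrite ?mulf_neq0 ?expf_neq0 ?pnatr_eq0.
  have S_le : s (j + l)%N ^+ 2 <= 4 * (w l * s (j + j)%N) * (w j * s (l + l)%N).
    have -> : 4 * (w l * s (j + j)%N) * (w j * s (l + l)%N) =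
        (2 ^+ (j + l + 2))^-1 * (s (j + j)%N * s (l + l)%N) by rewrite -w_prod; ring.
    by rewrite ler_pdivlMl ?exprn_gt0 ?s_cross.
  have := quadratic_form2_ge0 (b j) (b l)
    (mulr_ge0 (ltW (w_gt0 l)) (s_ge0 j)) (mulr_ge0 (ltW (w_gt0 j)) (s_ge0 l)) S_le.
  by rewrite /A; lra.
have term j l : (if j == l then A j else 0) - (w l * A j + w j * A l)
    <= s (j + l)%N * (b j * b l).
  case: ltngtP => [jl|lj|<-]; rewrite ?sub0r; first exact: cross.
    by have := cross l j lj; rewrite addnC [b l * _]mulrC addrC.
  by have := mulr_ge0 (ltW (w_gt0 j)) (A_ge0 j); rewrite /A; lra.
pose sw := \sum_(l < M) w l; pose sA := \sum_(j < M) A j.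
have lower : sA - (sw * sA + sw * sA) <=
    \sum_(j < M) \sum_(l < M) s (j + l)%N * (b j * b l).
  apply: le_trans; last by apply: ler_sum => j _; apply: ler_sum => l _; apply: term.
  rewrite (eq_bigr (fun j : 'I_M => A j - (sw * A j + w j * sA))) => [|j _].
    by rewrite sumrB big_split -mulr_suml -mulr_sumr.
  rewrite sumrB big_split -mulr_suml -mulr_sumr (bigD1 j) //= eqxx.
  by rewrite big1 ?addr0 // => l; exact: ifN_eqC.
have sw_le : sw <= 2^-1 by apply: sum_inv_pow2_le.
have sA_ge0 : 0 <= sA by apply: sumr_ge0 => j _.
apply: le_trans lower; nra.
Qed.

Lemma sum_coef_sos_ge0 (s : nat -> R) N (gs : seq {poly R}) :
    (forall j, 0 <= s (j + j)%N) ->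
    (forall j l, (j < l)%N ->
       2 ^+ (j + l + 2) * s (j + l)%N ^+ 2 <= s (j + j)%N * s (l + l)%N) ->
    (forall g, g \in gs -> (2 * size g <= N)%N) ->
  0 <= \sum_(i < N) s i * (\sum_(g <- gs) g ^+ 2)`_i.
Proof.
move=> s_ge0 s_cross gsN; under eq_bigr => i _ do rewrite coef_sum mulr_sumr.
rewrite exchange_big big_seq sumr_ge0 // => g /gsN gN.
by rewrite sum_coef_sqr // hankel_form_ge0.
Qed.

End HankelForm.

Lemma mulr_expn_le_split (R : realDomainType) (a u : R) m M :
  1 <= a -> 0 <= u -> (m < M)%N -> a * u ^+ m <= a ^+ m.+1 + u ^+ M.
Proof.
move=> a_ge1 u_ge0 mM; have a_ge0 : 0 <= a by apply: le_trans a_ge1.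
have [ua|au] := lerP u a.
  have : a * u ^+ m <= a * a ^+ m by rewrite ler_wpM2l // lerXn2r.
  by have := exprn_ge0 M u_ge0; rewrite exprS; lra.
have u_ge1 : 1 <= u by rewrite (le_trans a_ge1) ?ltW.
have : a * u ^+ m <= u ^+ m.+1 by rewrite exprS ler_wpM2r ?exprn_ge0 // ltW.
by have := ler_weXn2l u_ge1 mM; have := exprn_ge0 m.+1 a_ge0; lra.
Qed.

Fixpoint ppk (r : nat -> nat) (n : nat) : nat :=
  if n is n'.+1 then (2 * (ppk r n' * r n') + 1)%N else 1%N.

Lemma ppk_gt0 r n : (0 < ppk r n)%N.
Proof. by case: n => //= n; rewrite addn1. Qed.

Section Constants.
Variables (R : realDomainType) (r : nat -> nat).
Local Notation m n := (ppk r n * r n)%N.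

(* For j + l = 2h, 2^(j+l+2) s_(j+l)^2 = (2h)! * ppD h * (c_h + x^(2 m_h))^2; the
   recursion of ppc is what ppc_dominates needs to absorb this for every l > h. *)
Definition ppD (n : nat) : R := 2 ^+ (n + n + 2) * (n + n)`!%:R.

Fixpoint ppc (n : nat) : R :=
  if n is n'.+1 then ppc n' + 2 * ppD n' * ppc n' ^+ 2 + (2 * ppD n') ^+ (2 * m n').+1
  else 1.

Lemma ppD_ge1 n : 1 <= ppD n.
Proof. by rewrite mulr_ege1 ?exprn_ege1 ?ler1n ?fact_gt0 ?ler1Sn. Qed.

Lemma ppc_le_succ n : ppc n <= ppc n.+1.
Proof.
have D_ge0 : 0 <= 2 * ppD n by rewrite mulr_ge0 ?(le_trans ler01 (ppD_ge1 n)).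
have := mulr_ge0 D_ge0 (sqr_ge0 (ppc n)); have := exprn_ge0 (2 * m n).+1 D_ge0.
by rewrite /=; lra.
Qed.

Lemma ppc_ge1 n : 1 <= ppc n.
Proof. by elim: n => // n IH; apply: le_trans (ppc_le_succ n). Qed.

Lemma ppc_mono : {homo ppc : n l / (n <= l)%N >-> n <= l}.
Proof. by apply: homo_leq => [//|y x z|]; [apply: le_trans | apply: ppc_le_succ]. Qed.

Hypothesis r_gt0 : forall i, (0 < r i)%N.

Lemma ppk_mul_double_lt n l : (n < l)%N -> (2 * m n < m l)%N.
Proof.
have m_succ i : (2 * m i < m i.+1)%N by rewrite /= addn1; exact: leq_pmulr.
have m_mono : {homo (fun i => m i) : i j / (i <= j)%N}.
  by apply: homo_leq => [//|y x z|i]; [exact: leq_trans | have := m_succ i; lia].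
by move=> nl; apply: leq_trans (m_succ n) (m_mono _ _ nl).
Qed.

Lemma ppc_dominates h l u : (h < l)%N -> 0 <= u ->
  ppD h * (ppc h + u ^+ m h) ^+ 2 <= ppc l + u ^+ m l.
Proof.
move=> hl u_ge0; set D := ppD h; set c := ppc h; set v := u ^+ m h.
have D_ge1 : 1 <= D := ppD_ge1 h.
have sqr_le : D * (c + v) ^+ 2 <= 2 * D * c ^+ 2 + 2 * D * v ^+ 2.
  by have := sqr_ge0 (c - v); nra.
have v_le : 2 * D * v ^+ 2 <= (2 * D) ^+ (2 * m h).+1 + u ^+ m l.
  by rewrite /v -exprM mulnC mulr_expn_le_split ?ppk_mul_double_lt //; lra.
have c_le : c + 2 * D * c ^+ 2 + (2 * D) ^+ (2 * m h).+1 <= ppc l := ppc_mono hl.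
have c_ge1 : 1 <= c := ppc_ge1 h.
lra.
Qed.

End Constants.

Definition diff_op_weight (R : nzRingType) (p : nat -> {poly R}) (x : R) (i : nat) : R :=
  (p i).[x] * i`!%:R.

Section PolynomialWeights.
Variables (R : realDomainType) (r : nat -> nat) (p : nat -> {poly R}) (x : R).
Hypothesis r_gt0 : forall i, (0 < r i)%N.
Hypothesis p_even : forall i, p (2 * i)%N = (ppc R r i)%:P + 'X^(2 * ppk r i * r i).
Hypothesis p_odd : forall i, p (2 * i + 1)%N = 0.
Local Notation s := (diff_op_weight p x).
Local Notation a i := (ppc R r i + (x ^+ 2) ^+ (ppk r i * r i)).

Lemma weight_even i : s (i + i) = (i + i)`!%:R * a i.
Proof. by rewrite /diff_op_weight addnn -mul2n p_even !hornerE -mulnA exprM mulrC. Qed.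

Lemma weight_odd i : s (i + i).+1 = 0.
Proof. by rewrite /diff_op_weight addnn -mul2n -[(2 * i).+1]addn1 p_odd horner0 mul0r. Qed.

Lemma even_value_ge1 i : 1 <= a i.
Proof. by have := ppc_ge1 R r i; have := exprn_ge0 (ppk r i * r i) (sqr_ge0 x); lra. Qed.

Lemma weight_even_ge0 i : 0 <= s (i + i).
Proof. by rewrite weight_even mulr_ge0 ?(le_trans ler01 (even_value_ge1 i)). Qed.

Lemma weight_cross j l : (j < l)%N ->
  2 ^+ (j + l + 2) * s (j + l)%N ^+ 2 <= s (j + j)%N * s (l + l)%N.
Proof.
move=> jl; have rhs_ge0 := mulr_ge0 (weight_even_ge0 j) (weight_even_ge0 l).
have := odd_double_half (j + l); set h := (j + l)./2; rewrite -addnn.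
case: (odd (j + l)) => /= jl_eq.
  by rewrite -jl_eq add1n weight_odd expr2 mul0r mulr0.
have [jh hl] : (j < h)%N /\ (h < l)%N by lia.
rewrite -jl_eq add0n !weight_even.
have a_ge0 i : 0 <= a i by apply: le_trans (even_value_ge1 i).
have fact_le : (h + h)`!%:R <= (l + l)`!%:R :> R by rewrite ler_nat; apply: leq_fact; lia.
have dom := ppc_dominates r_gt0 hl (sqr_ge0 x).
have -> : 2 ^+ (h + h + 2) * ((h + h)`!%:R * a h) ^+ 2 =
    (h + h)`!%:R * (ppD R h * a h ^+ 2) by rewrite /ppD; ring.
apply: (le_trans (ler_wpM2l _ dom)) => //.
apply: (le_trans (ler_wpM2r (a_ge0 l) fact_le)).
have left_ge1 : 1 <= (j + j)`!%:R * a j.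
  by rewrite mulr_ege1 ?even_value_ge1 // ler1n fact_gt0.
by rewrite -[leLHS]mul1r ler_wpM2r ?mulr_ge0.
Qed.
End PolynomialWeights.

Lemma horner_diff_op (R : realType) (p : nat -> {poly R}) f x :
  (diff_op p f).[x] = \sum_(i < size f) diff_op_weight p x i * (f \Po ('X + x%:P))`_i.
Proof.
rewrite /diff_op horner_sum; apply: eq_bigr => i _.
by rewrite hornerM horner_derivn_comp_XaddC /diff_op_weight (mulrC _ i`!%:R) mulrA.
Qed.

Theorem proposition4p2 (R : realType) (r : nat -> nat) (hr : forall i, (0 < r i)%N) :
  exists (c : nat -> R) (k : nat -> nat),
    (forall i, 0 < c i) /\ (forall i, (0 < k i)%N) /\
    forall p : nat -> {poly R},
      (forall i, p (2 * i)%N = (c i)%:P + 'X^(2 * k i * r i)) ->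
      (forall i, p (2 * i + 1)%N = 0) ->
      positivity_preserver (diff_op p).
Proof.
exists (ppc R r), (ppk r); split; first by move=> i; apply: lt_le_trans (ppc_ge1 R r i).
split; first exact: ppk_gt0.
move=> p p_even p_odd f f_ge0 x; have [hs f_sos] := nonneg_poly_sos f_ge0.
pose Y := 'X + x%:P : {poly R}.
have size_Y : size Y = 2%N by rewrite size_XaddC.
pose N := (size f + \sum_(h <- hs) 2 * size h)%N.
have fN : (size (f \Po Y) <= size f <= N)%N by rewrite size_comp_poly2 // leqnn leq_addr.
rewrite horner_diff_op -/Y -(sum_coef_widen _ fN).
have -> : f \Po Y = \sum_(g <- [seq h \Po Y | h <- hs]) g ^+ 2.
  by rewrite f_sos rmorph_sum big_map; apply: eq_bigr => h _; rewrite rmorphXn.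
apply: sum_coef_sos_ge0.
- exact: weight_even_ge0.
- exact: weight_cross.
move=> _ /mapP[h h_in ->]; rewrite size_comp_poly2 // /N (big_rem h h_in) /=.
by rewrite addnCA leq_addr.
Qed.
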